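(* Let $\mu$ be the Cauchy distribution $d\mu(x)=\frac1\pi\frac{dx}{1+x^2}$ and $t>0$. Then for $u\in\mathbb R$, \[\frac{d\psi_{t}}{du}(u)=\frac{t+4v^2(1+v)^2}{(1+v)(t+2v^2(1+v))},\qquad v=v_{t}(u).\]
   Context: $v_t(u)=\inf\{v>0:\int\frac{d\mu(x)}{(u-x)^2+v^2}\le\frac1t\}$; $H_t(z)=z+t\int\frac{d\mu(x)}{z-x}$; $\psi_t(u)=H_t(u+iv_t(u))=u+t\int\frac{(u-x)\,d\mu(x)}{(u-x)^2+v_t(u)^2}$. *)

From HB Require Import structures.
From mathcomp Require Import all_boot all_order all_algebra.
From mathcomp Require Import all_classical all_reals all_analysis.
Set Implicit Arguments. Unset Strict Implicit. Unset Printing Implicit Defensive.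
Import Order.TTheory GRing.Theory Num.Theory.
Local Open Scope classical_set_scope.
Local Open Scope ring_scope.

Definition cauchy_density {R : realType} (x : R) : R := pi^-1 / (1 + x ^+ 2).

Definition cauchy_eint {R : realType} (f : R -> R) : \bar R :=
  (\int[@lebesgue_measure R]_(x in [set: R]) (f x * cauchy_density x)%:E)%E.

Definition cauchy_int {R : realType} (f : R -> R) : R :=
  Rintegral (@lebesgue_measure R) [set: R] (fun x => f x * cauchy_density x).

Definition vt {R : realType} (t u : R) : R :=
  inf [set v : R | 0 < v /\
         (cauchy_eint (fun x : R => ((u - x) ^+ 2 + v ^+ 2)^-1)%R <= (t^-1)%:E)%E].

Definition psi {R : realType} (t u : R) : R :=
  u + t * cauchy_int (fun x => (u - x) / ((u - x) ^+ 2 + vt t u ^+ 2)).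

(* The Cauchy law is the Poisson kernel at height 1, so that
   [\int dmu(x) / ((u - x)^2 + v^2) = (1 + v) / (v (u^2 + (1 + v)^2))] and
   [\int (u - x) dmu(x) / ((u - x)^2 + v^2) = u / (u^2 + (1 + v)^2)]; both
   integrals are evaluated with explicit primitives obtained by partial fractions
   (logarithms and arctangents).  Consequently [v_t(u)] is the unique positive
   root of [t (1 + v) / v - (1 + v)^2 = u^2], whose left-hand side is strictly
   decreasing in [v], and [psi_t(u) = u (1 + 2 v) / (1 + v)].  The inverse
   function theorem gives [dv/du], and eliminating [u^2] yields the formula. *)

From HB Require Import structures.
From mathcomp Require Import all_boot all_order all_algebra.
From mathcomp Require Import all_classical all_reals all_analysis.
From mathcomp Require Import measurable_realfun ring lra.
Import Order.TTheory GRing.Theory Num.Theory.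
Import numFieldNormedType.Exports.
Local Open Scope classical_set_scope.
Local Open Scope ring_scope.

Section FTC_on_R.
Context {R : realType}.
Local Notation mu := (@lebesgue_measure R).
Implicit Types (f F g G : R -> R) (a l lp lm gp gm x : R).

Lemma ge0_continuous_FTC2y_is_derive {f F} a {l} :
  continuous f -> (forall x, is_derive x 1 F (f x)) -> (forall x, 0 <= f x) ->
  F x @[x --> +oo] --> l ->
  (\int[mu]_(x in `[a, +oo[) (f x)%:E = (l - F a)%:E)%E.
Proof.
move=> cf dF f0 Fl; rewrite EFinB; apply: ge0_continuous_FTC2y => //.
- exact: continuous_subspaceT.
- by apply: cvg_at_right_filter; case: (dF a) => /derivable1_diffP/differentiable_continuous.
- by move=> x _; rewrite derive1E; exact: derive_val.
Qed.

Lemma ge0_continuous_FTC2T {f F lp lm} :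
  continuous f -> (forall x, is_derive x 1 F (f x)) -> (forall x, 0 <= f x) ->
  F x @[x --> +oo] --> lp -> F x @[x --> -oo] --> lm ->
  (\int[mu]_(x in [set: R]) (f x)%:E = (lp - lm)%:E)%E.
Proof.
move=> cf dF f0 Fp Fm.
have mf : measurable_fun [set: R] f by exact: continuous_measurable_fun.
rewrite -(setUv `[0, +oo[) ge0_integral_setU//=; first last.
- exact/disj_setPCl.
- by move=> x _; rewrite lee_fin.
- by apply/measurable_EFinP; rewrite setUv.
- exact: measurableC.
rewrite setCitvr integral_itv_bndo_bndc; last exact/measurable_EFinP/measurable_funTS.
rewrite -{2}oppr0 ge0_integration_by_substitutionNy//; last exact: continuous_subspaceT.
have dFN x : is_derive x 1 (fun y => - F (- y)) ((f \o -%R) x).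
  by apply: is_derive_eq; rewrite /= mulrN1 opprK.
have FNy : (fun y => - F (- y)) x @[x --> +oo] --> - lm.
  by apply: cvgN; apply/cvgNy_compNP.
rewrite (ge0_continuous_FTC2y_is_derive 0 cf dF f0 Fp).
rewrite (ge0_continuous_FTC2y_is_derive 0 _ dFN _ FNy) //=.
- by rewrite -EFinD oppr0 opprK; congr EFin; ring.
- by move=> x; apply: continuous_comp; [exact: opp_continuous | exact: cf].
Qed.

Lemma ge0_continuous_integrableT {f r} : continuous f -> (forall x, 0 <= f x) ->
  (\int[mu]_(x in [set: R]) (f x)%:E = r%:E)%E -> mu.-integrable [set: R] (EFin \o f).
Proof.
move=> cf f0 fr; apply/integrableP; split.
  by apply/measurable_EFinP; exact: continuous_measurable_fun.
under eq_integral do rewrite /comp gee0_abs ?lee_fin //.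
by rewrite fr ltry.
Qed.

Lemma continuous_FTC2T_lbound {f F g G lp lm gp gm} :
  continuous f -> (forall x, is_derive x 1 F (f x)) ->
  F x @[x --> +oo] --> lp -> F x @[x --> -oo] --> lm ->
  continuous g -> (forall x, is_derive x 1 G (g x)) ->
  G x @[x --> +oo] --> gp -> G x @[x --> -oo] --> gm ->
  (forall x, 0 <= g x) -> (forall x, 0 <= f x + g x) ->
  Rintegral mu [set: R] f = lp - lm.
Proof.
move=> cf dF Fp Fm cg dG Gp Gm g0 fg0.
have cfg : continuous (f \+ g) by move=> x; apply: continuousD; [exact: cf | exact: cg].
have dFG x : is_derive x 1 (F \+ G) (f x + g x) by exact: is_deriveD.
have Ig := ge0_continuous_FTC2T cg dG g0 Gp Gm.
have Ifg : (\int[mu]_x (f x + g x)%:E = (lp + gp - (lm + gm))%:E)%E.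
  by apply: (ge0_continuous_FTC2T cfg dFG fg0); apply: cvgD.
rewrite /Rintegral; under eq_integral => x _ do rewrite -[f x](addrK (g x)) EFinB.
rewrite integralB_EFin ?Ifg ?Ig //=; first by ring.
- exact: ge0_continuous_integrableT Ifg.
- exact: ge0_continuous_integrableT Ig.
Qed.
End FTC_on_R.

Lemma is_derive_ln_comp {R : realType} (f : R -> R) (x df : R) :
  0 < f x -> is_derive x 1 f df -> is_derive x 1 (fun y => ln (f y)) (df / f x).
Proof. by move=> fx0 df0; have := is_derive1_comp (is_derive1_ln fx0) df0; rewrite mulrC. Qed.

Lemma is_derive_continuous {R : realType} (f : R -> R) (x df : R) :
  is_derive x 1 f df -> {for x, continuous f}.
Proof. by case=> /derivable1_diffP/differentiable_continuous. Qed.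

Lemma cvg_at_infty_comp_inv {R : realType} (g r : R -> R) :
  {for 0, continuous r} -> (forall x, x != 0 -> g x = r x^-1) ->
  g x @[x --> +oo] --> r 0 /\ g x @[x --> -oo] --> r 0.
Proof.
move=> cr gr; split.
- apply: (@cvg_trans _ ((r \o GRing.inv) x @[x --> +oo])).
    apply: near_eq_cvg; near=> x.
    rewrite /= gr // gt_eqF //; near: x; exact: nbhs_pinfty_gt.
  apply: (@cvg_comp _ _ _ GRing.inv r _ (nbhs (0:R))); last exact: cr.
  apply/(@gtr0_cvgV0 _ _ _ _ id); last exact: cvg_id.
  by near=> x; near: x; exact: nbhs_pinfty_gt.
- apply: (@cvg_trans _ ((r \o GRing.inv) x @[x --> -oo])).
    apply: near_eq_cvg; near=> x.
    rewrite /= gr // lt_eqF //; near: x; exact: nbhs_ninfty_lt.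
  apply: (@cvg_comp _ _ _ GRing.inv r _ (nbhs (0:R))); last exact: cr.
  apply/(@ltr0_cvgV0 _ _ _ _ id); last exact: cvg_id.
  by near=> x; near: x; exact: nbhs_ninfty_lt.
Unshelve. all: by end_near.
Qed.

Section atan_limits.
Context {R : realType}.

Lemma cvgNy_atan : (@atan R) x @[x --> -oo] --> - (pi / 2).
Proof.
apply/cvgNy_compNP; have -> : (@atan R) \o -%R = (fun x => - atan x).
  by apply/funext => x /=; rewrite atanN.
apply: cvgN; exact: cvgy_atan.
Qed.

Variables (u v : R).
Hypothesis v_gt0 : 0 < v.

Lemma cvgy_atan_affine : atan ((x - u) / v) @[x --> +oo] --> pi / 2.
Proof.
apply: (@cvg_comp _ _ _ (fun x => (x - u) / v) atan _ +oo); last exact: cvgy_atan.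
apply/cvgryPge => A; near=> x; rewrite ler_pdivlMr // lerBrDr.
by near: x; apply: nbhs_pinfty_ge; rewrite num_real.
Unshelve. all: by end_near.
Qed.

Lemma cvgNy_atan_affine : atan ((x - u) / v) @[x --> -oo] --> - (pi / 2).
Proof.
apply: (@cvg_comp _ _ _ (fun x => (x - u) / v) atan _ -oo); last exact: cvgNy_atan.
apply/cvgrNyPle => A; near=> x; rewrite ler_pdivrMr // lerBlDr.
by near: x; apply: nbhs_ninfty_le; rewrite num_real.
Unshelve. all: by end_near.
Qed.

End atan_limits.

Lemma scalerE_mul {R : realType} (a b : R) : a *: b = a * b. Proof. by []. Qed.

Section partial_fraction_primitive.
Context {R : realType}.
Variables (u v : R).
Hypothesis v_gt0 : 0 < v.
Implicit Types (a b c d e x : R).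

Local Notation P x := (1 + x ^+ 2).
Local Notation Q x := ((x - u) ^+ 2 + v ^+ 2).

Let P_gt0 x : 0 < P x. Proof. by rewrite ltr_pwDl // sqr_ge0. Qed.
Let Q_gt0 x : 0 < Q x. Proof. by rewrite ltr_wpDl ?sqr_ge0 // exprn_gt0. Qed.

(* For [d = e = 0] the derivative [pf_integrand] covers the partial fraction
   decompositions over [P x * Q x]; the term in [d] and [e] is only needed when
   [P] and [Q] coincide ([u = 0], [v = 1]). *)
Definition pf_primitive a b c d e x :=
  a * (ln (P x) - ln (Q x)) + b * atan x + c * atan ((x - u) / v) + (d * x + e) / P x.

Definition pf_integrand a b c d e x :=
  2 * a * (x / P x - (x - u) / Q x) + b / P x + c * v / Q x +
  (d * (1 - x ^+ 2) - 2 * e * x) / P x ^+ 2.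

Lemma is_derive_pf_primitive a b c d e x :
  is_derive x 1 (pf_primitive a b c d e) (pf_integrand a b c d e x).
Proof.
have P0 := P_gt0 x; have Q0 := Q_gt0 x.
have := @is_derive_ln_comp _ (fun x => P x) x _ P0 _.
have := @is_derive_ln_comp _ (fun x => Q x) x _ Q0 _.
have Pn0 : P x != 0 by rewrite gt_eqF.
move=> ? ?; apply: is_derive_eq.
rewrite /pf_integrand !scalerE_mul !mulr1; field.
by rewrite (gt_eqF P0) (gt_eqF Q0) gt_eqF.
Qed.

Let ln_ratio_cvg :
  ln (P x) - ln (Q x) @[x --> +oo] --> 0 /\ ln (P x) - ln (Q x) @[x --> -oo] --> 0.
Proof.
pose r y := (y ^+ 2 + 1) / ((1 - u * y) ^+ 2 + (v * y) ^+ 2).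
have r0 : r 0 = 1 by rewrite /r !mulr0 subr0 expr1n expr0n !addr0 divr1 add0r.
have <- : ln (r 0) = 0 by rewrite r0 ln1.
apply: (@cvg_at_infty_comp_inv _ _ (fun y => ln (r y))) => [|x x0].
  apply: continuous_comp; last by rewrite r0; exact: continuous_ln.
  have : (1 - u * 0) ^+ 2 + (v * 0) ^+ 2 != 0.
    by rewrite !mulr0 subr0 expr1n expr0n addr0 oner_neq0.
  by move=> ?; apply: is_derive_continuous.
rewrite -ln_div ?posrE ?P_gt0 ?Q_gt0 //; congr ln.
by rewrite /r; field; rewrite x0 (gt_eqF (Q_gt0 x)).
Qed.

Let rational_cvg d e :
  (d * x + e) / P x @[x --> +oo] --> 0 /\ (d * x + e) / P x @[x --> -oo] --> 0.
Proof.
pose r y := (d * y + e * y ^+ 2) / (y ^+ 2 + 1).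
have r0 : r 0 = 0 by rewrite /r mulr0 expr0n mulr0 addr0 mul0r.
rewrite -r0; apply: (@cvg_at_infty_comp_inv _ _ r) => [|x x0].
  have : (0 : R) ^+ 2 + 1 != 0 by rewrite expr0n add0r oner_neq0.
  by move=> ?; apply: is_derive_continuous.
by rewrite /r; field; rewrite x0 (gt_eqF (P_gt0 x)).
Qed.

Lemma pf_primitive_cvgy a b c d e :
  pf_primitive a b c d e x @[x --> +oo] --> (b + c) * (pi / 2).
Proof.
rewrite (_ : (b + c) * _ = a * 0 + b * (pi / 2) + c * (pi / 2) + 0); last by ring.
apply: cvgD; last exact: (rational_cvg d e).1.
apply: cvgD; last exact: cvgMl_tmp (cvgy_atan_affine u v v_gt0).
apply: cvgD; last exact: cvgMl_tmp (@cvgy_atan R).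
exact: cvgMl_tmp ln_ratio_cvg.1.
Qed.

Lemma pf_primitive_cvgNy a b c d e :
  pf_primitive a b c d e x @[x --> -oo] --> - ((b + c) * (pi / 2)).
Proof.
rewrite (_ : - _ = a * 0 + b * - (pi / 2) + c * - (pi / 2) + 0); last by ring.
apply: cvgD; last exact: (rational_cvg d e).2.
apply: cvgD; last exact: cvgMl_tmp (cvgNy_atan_affine u v v_gt0).
apply: cvgD; last exact: cvgMl_tmp cvgNy_atan.
exact: cvgMl_tmp ln_ratio_cvg.2.
Qed.

End partial_fraction_primitive.

Lemma continuous_cauchy_density {R : realType} : continuous (@cauchy_density R).
Proof.
move=> x; have : 1 + x ^+ 2 != 0 by rewrite gt_eqF // ltr_pwDl // sqr_ge0.
by move=> ?; apply: is_derive_continuous.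
Qed.

Lemma cauchy_density_ge0 {R : realType} (x : R) : 0 <= cauchy_density x.
Proof. by rewrite divr_ge0 ?invr_ge0 ?pi_ge0 // addr_ge0 ?sqr_ge0. Qed.

Lemma is_derive_cauchy_cdf {R : realType} (x : R) :
  is_derive x 1 (fun y => pi^-1 * atan y) (cauchy_density x).
Proof. by apply: is_derive_eq; rewrite scalerE_mul. Qed.

Section cauchy_integrals_by_primitive.
Context {R : realType}.
Variables (u v : R).
Hypothesis v_gt0 : 0 < v.
Variables (f : R -> R) (a b c d e : R).
Hypotheses (cf : continuous f)
  (fE : forall x, pi * (f x * cauchy_density x) = pf_integrand u v a b c d e x).

Let F x := pi^-1 * pf_primitive u v a b c d e x.

Let dF (x : R) : is_derive x 1 F (f x * cauchy_density x).
Proof.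
rewrite /F -[f x * _](mulKf (lt0r_neq0 (@pi_gt0 R))) fE.
have := is_derive_pf_primitive u v v_gt0 a b c d e x.
by move=> ?; apply: is_derive_eq.
Qed.

Let Fy : F x @[x --> +oo] --> pi^-1 * ((b + c) * (pi / 2)).
Proof. exact: cvgMl_tmp (pf_primitive_cvgy u v v_gt0 a b c d e). Qed.

Let FNy : F x @[x --> -oo] --> pi^-1 * - ((b + c) * (pi / 2)).
Proof. exact: cvgMl_tmp (pf_primitive_cvgNy u v v_gt0 a b c d e). Qed.

Let Fy_Ny : pi^-1 * ((b + c) * (pi / 2)) - pi^-1 * - ((b + c) * (pi / 2)) = b + c.
Proof. by move: (@pi_gt0 R); move: pi => p p0; field; rewrite gt_eqF. Qed.

Let cfd : continuous (fun x => f x * cauchy_density x).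
Proof. by move=> x; apply: continuousM; [exact: cf | exact: continuous_cauchy_density]. Qed.

Lemma cauchy_eint_by_primitive : (forall x, 0 <= f x) -> cauchy_eint f = (b + c)%:E.
Proof.
move=> f0; rewrite /cauchy_eint (ge0_continuous_FTC2T cfd dF _ Fy FNy) ?Fy_Ny // => x.
by rewrite mulr_ge0 ?cauchy_density_ge0.
Qed.

Lemma cauchy_int_by_primitive (M : R) : (forall x, `|f x| <= M) -> cauchy_int f = b + c.
Proof.
move=> fM; have M0 : 0 <= M := le_trans (normr_ge0 _) (fM 0).
have cg : continuous (fun x => M * cauchy_density x).
  by move=> x; apply: continuousM; [exact: cvg_cst | exact: continuous_cauchy_density].
have dG (x : R) : is_derive x 1 (fun y => M * (pi^-1 * atan y)) (M * cauchy_density x).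
  by have := is_derive_cauchy_cdf x; move=> ?; apply: is_derive_eq.
rewrite /cauchy_int -Fy_Ny (continuous_FTC2T_lbound cfd dF Fy FNy cg dG
  (cvgMl_tmp (cvgMl_tmp (@cvgy_atan R))) (cvgMl_tmp (cvgMl_tmp cvgNy_atan))) //.
- by move=> x; rewrite mulr_ge0 ?cauchy_density_ge0.
- move=> x; rewrite -mulrDl mulr_ge0 ?cauchy_density_ge0 // -lerBlDr sub0r.
  by move: (fM x); rewrite ler_norml => /andP[].
Qed.
End cauchy_integrals_by_primitive.

Lemma pi_mul_cauchy_density {R : realType} (y x : R) :
  pi * (y * cauchy_density x) = y / (1 + x ^+ 2).
Proof. by rewrite /cauchy_density mulrCA mulVKf // gt_eqF // pi_gt0. Qed.

Lemma conjugate_poisson_bound {R : realType} (s v : R) :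
  0 < v -> `|s / (s ^+ 2 + v ^+ 2)| <= (2 * v)^-1.
Proof.
move=> v0; have Q0 : 0 < s ^+ 2 + v ^+ 2 by rewrite ltr_wpDl ?sqr_ge0 // exprn_gt0.
rewrite normrM normfV (gtr0_norm Q0) ler_pdivrMr // ler_pdivlMl ?mulr_gt0 //.
rewrite -real_normK ?num_real //; have := sqr_ge0 (`|s| - v); nra.
Qed.

Section poisson_integrals.
Context {R : realType}.
Variables (u v : R).
Hypothesis v_gt0 : 0 < v.
Implicit Types x : R.

Let P_neq0 x : 1 + x ^+ 2 != 0.
Proof. by rewrite gt_eqF // ltr_pwDl // sqr_ge0. Qed.

Let Q_neq0 x : (x - u) ^+ 2 + v ^+ 2 != 0.
Proof. by rewrite gt_eqF // ltr_wpDl ?sqr_ge0 // exprn_gt0. Qed.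

Let Q'_neq0 x : (u - x) ^+ 2 + v ^+ 2 != 0.
Proof. by rewrite -opprB sqrrN. Qed.

Let v_neq0 : v != 0. Proof. exact: lt0r_neq0. Qed.

Let target_neq0 : u ^+ 2 + (1 + v) ^+ 2 != 0.
Proof. by rewrite gt_eqF // ltr_wpDl ?sqr_ge0 // exprn_gt0 // ltr_wpDl. Qed.

(* The quantity below is the resultant of [1 + x ^+ 2] and [(x - u) ^+ 2 + v ^+ 2]. *)
Let pf_denom_cases :
  (u = 0 /\ v = 1) \/ 0 < (u ^+ 2 + v ^+ 2 - 1) ^+ 2 + 4 * u ^+ 2.
Proof.
have [->|u0] := eqVneq u 0; last first.
  by right; rewrite ltr_wpDl ?sqr_ge0 // mulr_gt0 // exprn_even_gt0.
have [->|v1] := eqVneq v 1; first by left.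
right; rewrite expr0n mulr0 addr0 add0r exprn_even_gt0 // subr_eq0.
by rewrite -(expr1n R 2) eqrXn2 // ltW.
Qed.

Lemma cauchy_eint_poisson :
  cauchy_eint (fun x => ((u - x) ^+ 2 + v ^+ 2)^-1) =
  ((1 + v) / (v * (u ^+ 2 + (1 + v) ^+ 2)))%:E.
Proof.
have cf : continuous (fun x => ((u - x) ^+ 2 + v ^+ 2)^-1).
  by move=> x; have := Q'_neq0 x; move=> ?; apply: is_derive_continuous.
have f0 x : 0 <= ((u - x) ^+ 2 + v ^+ 2)^-1 by rewrite invr_ge0 addr_ge0 ?sqr_ge0.
case: pf_denom_cases => [[u0 v1] | K0].
  rewrite (cauchy_eint_by_primitive u v v_gt0 _ 0 (1/2) 0 (1/2) 0 cf) // => [|x].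
    by rewrite u0 v1; congr EFin; field.
  by rewrite pi_mul_cauchy_density /pf_integrand u0 v1; field.
pose K := (u ^+ 2 + v ^+ 2 - 1) ^+ 2 + 4 * u ^+ 2.
rewrite (cauchy_eint_by_primitive u v v_gt0 _ (u / K) ((u ^+ 2 + v ^+ 2 - 1) / K)
  ((u ^+ 2 - v ^+ 2 + 1) / (v * K)) 0 0 cf) // => [|x].
  by congr EFin; rewrite /K; field; rewrite target_neq0 v_neq0 gt_eqF.
by rewrite pi_mul_cauchy_density /pf_integrand /K; field; rewrite P_neq0 Q_neq0 v_neq0 gt_eqF.
Qed.

Lemma cauchy_int_conjugate_poisson :
  cauchy_int (fun x => (u - x) / ((u - x) ^+ 2 + v ^+ 2)) = u / (u ^+ 2 + (1 + v) ^+ 2).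
Proof.
have cf : continuous (fun x => (u - x) / ((u - x) ^+ 2 + v ^+ 2)).
  by move=> x; have := Q'_neq0 x; move=> ?; apply: is_derive_continuous.
case: pf_denom_cases => [[u0 v1] | K0].
  rewrite (cauchy_int_by_primitive u v v_gt0 _ 0 0 0 0 (1/2) cf _ _ (fun x => conjugate_poisson_bound _ _ v_gt0)) => [|x].
    by rewrite u0 v1; field.
  by rewrite pi_mul_cauchy_density /pf_integrand u0 v1; field.
pose K := (u ^+ 2 + v ^+ 2 - 1) ^+ 2 + 4 * u ^+ 2.
rewrite (cauchy_int_by_primitive u v v_gt0 _ ((u ^+ 2 - v ^+ 2 + 1) / (2 * K))
  (u * (u ^+ 2 + v ^+ 2 + 1) / K) (- (2 * u * v) / K) 0 0 cf _ _ (fun x => conjugate_poisson_bound _ _ v_gt0)) => [|x].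
  by rewrite /K; field; rewrite target_neq0 gt_eqF.
by rewrite pi_mul_cauchy_density /pf_integrand /K; field; rewrite P_neq0 Q_neq0 gt_eqF.
Qed.
End poisson_integrals.

Section vt_level.
Context {R : realType}.
Variable t : R.
Hypothesis t_gt0 : 0 < t.
Implicit Types (s v w : R).

Definition vt_level v := t * (1 + v) / v - (1 + v) ^+ 2.

Definition vt_level_inv s := inf [set v | 0 < v /\ vt_level v <= s].

Definition vt_level_deriv v := - t / v ^+ 2 - 2 * (1 + v).

Lemma vt_level_deriv_lt0 v : 0 < v -> vt_level_deriv v < 0.
Proof.
move=> v0; rewrite /vt_level_deriv mulNr -opprD oppr_lt0.
by rewrite addr_gt0 ?divr_gt0 ?exprn_gt0 ?mulr_gt0 ?addr_gt0.
Qed.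

Lemma is_derive_vt_level v : 0 < v -> is_derive v 1 vt_level (vt_level_deriv v).
Proof.
move=> v0; have := @is_deriveV _ id v _ 1 (lt0r_neq0 v0) (is_derive_id v 1).
move=> ?; rewrite /vt_level; apply: is_derive_eq.
by rewrite /vt_level_deriv !scalerE_mul; field; rewrite lt0r_neq0.
Qed.

Lemma vt_level_decr v w : 0 < v -> v < w -> vt_level w < vt_level v.
Proof.
move=> v0 vw; have w0 := lt_trans v0 vw.
have -> : vt_level v = vt_level w + (w - v) * (t / (v * w) + 2 + v + w).
  by rewrite /vt_level; field; rewrite !gt_eqF.
by rewrite ltrDl mulr_gt0 ?subr_gt0 // !addr_gt0 // divr_gt0 // mulr_gt0.
Qed.

Lemma vt_level_root s : exists2 w, 0 < w & vt_level w = s.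
Proof.
have t0 := t_gt0.
have s_norm : - `|s| <= s <= `|s| by rewrite -ler_norml.
have s0 : 0 <= `|s| := normr_ge0 s.
(* [t (1 + a) / a = `|s| + 2 t + 4] beats [(1 + a) ^+ 2 < 4], while
   [(1 + b) ^+ 2 >= 1 + b > 2 t + `|s|] beats [t (1 + b) / b <= 2 t]. *)
set a := t / (`|s| + t + 4); set b := 2 * t + `|s| + 1.
have a0 : 0 < a by rewrite divr_gt0 //; lra.
have a1 : a < 1 by rewrite /a ltr_pdivrMr; lra.
have sa : s <= vt_level a.
  rewrite /vt_level (_ : t * (1 + a) / a = `|s| + 2 * t + 4); first nra.
  by rewrite /a; field; apply/andP; split; rewrite gt_eqF //; lra.
have sb : vt_level b <= s.
  have b1 : 1 <= b by rewrite /b; lra.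
  have : t * (1 + b) / b <= 2 * t by rewrite ler_pdivrMr; nra.
  rewrite /vt_level /b; nra.
have ab : a <= b by rewrite /b; lra.
have cl : {within `[a, b], continuous vt_level}.
  apply: derivable_within_continuous => x; rewrite in_itv /= => /andP[ax _].
  by case: (is_derive_vt_level _ (lt_le_trans a0 ax)).
have mid : Num.min (vt_level a) (vt_level b) <= s <= Num.max (vt_level a) (vt_level b).
  by rewrite ge_min le_max sa sb orbT.
have [w] := IVT ab cl mid; rewrite in_itv /= => /andP[aw _] <-.
by exists w; first exact: lt_le_trans aw.
Qed.

Lemma vt_level_invE s w : 0 < w -> vt_level w = s -> vt_level_inv s = w.
Proof.
move=> w0 <-; rewrite /vt_level_inv.
have -> : [set v | 0 < v /\ vt_level v <= vt_level w] = [set v | w <= v].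
  apply/seteqP; split => v /=.
  - case=> v0; apply: contraTT; rewrite -!ltNge => vw.
    exact: vt_level_decr.
  - move=> wv; split; first exact: lt_le_trans wv.
    by move: wv; rewrite le_eqVlt => /predU1P[-> // | /(vt_level_decr _ _ w0) /ltW].
apply/eqP; rewrite eq_le; apply/andP; split.
- by apply: ge_inf; [exists w => y | rewrite /= lexx].
- by apply: lb_le_inf; [exists w => /= | move=> y].
Qed.

Lemma vt_level_inv_gt0 s : 0 < vt_level_inv s.
Proof. by have [w w0 ws] := vt_level_root s; rewrite (vt_level_invE _ _ w0 ws). Qed.

Lemma vt_level_invK s : vt_level (vt_level_inv s) = s.
Proof. by have [w w0 ws] := vt_level_root s; rewrite (vt_level_invE _ _ w0 ws). Qed.

Lemma is_derive_vt_level_inv s :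
  is_derive s 1 vt_level_inv (vt_level_deriv (vt_level_inv s))^-1.
Proof.
have w0 := vt_level_inv_gt0 s.
rewrite -[X in is_derive X](vt_level_invK s); apply: is_derive_inverse.
- by near=> z; apply: vt_level_invE => //; near: z; exact: lt_nbhsr.
- near=> z; apply: is_derive_continuous.
  by apply: is_derive_vt_level; near: z; exact: lt_nbhsr.
- exact: is_derive_vt_level.
- by rewrite lt_eqF // vt_level_deriv_lt0.
Unshelve. all: by end_near.
Qed.
End vt_level.

Lemma poisson_eint_le_invE {R : realType} (t u v : R) : 0 < t -> 0 < v ->
  ((1 + v) / (v * (u ^+ 2 + (1 + v) ^+ 2)) <= t^-1) = (vt_level t v <= u ^+ 2).
Proof.
move=> t0 v0; have Q0 : 0 < u ^+ 2 + (1 + v) ^+ 2.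
  by rewrite ltr_wpDl ?sqr_ge0 // exprn_gt0 // ltr_wpDl.
rewrite -subr_le0 -[RHS]subr_le0.
have -> : (1 + v) / (v * (u ^+ 2 + (1 + v) ^+ 2)) - t^-1 =
  (vt_level t v - u ^+ 2) / (t * (u ^+ 2 + (1 + v) ^+ 2)).
  by rewrite /vt_level; field; rewrite !gt_eqF.
by rewrite pmulr_lle0 // invr_gt0 mulr_gt0.
Qed.

Lemma vtE {R : realType} (t u : R) : 0 < t -> vt t u = vt_level_inv t (u ^+ 2).
Proof.
move=> t0; rewrite /vt /vt_level_inv; congr inf; apply/seteqP.
by split=> v /= [v0 hv]; split=> //; move: hv;
  rewrite cauchy_eint_poisson // lee_fin poisson_eint_le_invE.
Qed.

Lemma psiE {R : realType} (t : R) : 0 < t ->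
  psi t = fun u => u * (1 + 2 * vt_level_inv t (u ^+ 2)) / (1 + vt_level_inv t (u ^+ 2)).
Proof.
move=> t0; apply/funext => u; rewrite /psi vtE //.
have w0 := vt_level_inv_gt0 t t0 (u ^+ 2).
have wE := vt_level_invK t t0 (u ^+ 2).
rewrite cauchy_int_conjugate_poisson //.
set w := vt_level_inv t (u ^+ 2) in w0 wE *.
have -> : u ^+ 2 + (1 + w) ^+ 2 = t * (1 + w) / w by rewrite -wE /vt_level; ring.
by field; rewrite !gt_eqF // ltr_wpDl.
Qed.

Theorem proposition6p4 (R : realType) (t : R) (ht : 0 < t) (u : R) :
  is_derive u 1 (psi t)
    ((t + 4 * vt t u ^+ 2 * (1 + vt t u) ^+ 2) /
     ((1 + vt t u) * (t + 2 * vt t u ^+ 2 * (1 + vt t u)))).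
Proof.
rewrite psiE // vtE //.
have w0 := vt_level_inv_gt0 t ht (u ^+ 2).
have wE := vt_level_invK t ht (u ^+ 2).
have dw := is_derive_vt_level_inv t ht (u ^+ 2).
set w := vt_level_inv t (u ^+ 2) in w0 wE dw *.
have w1 : 1 + w != 0 by rewrite gt_eqF // ltr_wpDl.
have l_neq0 := lt_eqF (vt_level_deriv_lt0 t ht w w0).
apply: is_derive_eq; rewrite !scalerE_mul.
transitivity ((1 + 2 * w) / (1 + w) + u ^+ 2 * (2 / (vt_level_deriv t w * (1 + w) ^+ 2))).
  by field; rewrite w1 l_neq0.
have D0 : 0 < t + 2 * (1 + w) * w ^+ 2.
  by rewrite addr_gt0 ?mulr_gt0 ?exprn_gt0 ?ltr_wpDl.
rewrite -wE /vt_level /vt_level_deriv; clearbody w; field.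
by rewrite mulNr -opprD oppr_eq0 mulrAC (gt_eqF D0) w1 gt_eqF.
Qed.
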